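(* Let $E$ be a real Banach space and let $\mu$ be a regular Borel probability measure on the compact space $(B_{E^{**}},w^* )$. Define $f_\mu:E^*\to\mathbb R_+$ by $f_\mu(x^* )=\int_{B_{E^{**}}}|x^*(\cdot)|\,d\mu$, where $x^*(x^{**})$ means $x^{**}(x^* )$. Then $f_\mu\in H_0[E]_+$ and $\|f_\mu\|_{FBL[E]}\le 1$.
   Context: For a real Banach space $E$ with dual $E^*$ and closed unit ball $B_E$, let $H[E]$ be the vector space of all positively homogeneous functions $f:E^*\to\mathbb R$ ($f(\lambda x^* )=\lambda f(x^* )$ for $\lambda>0$). For $f\in H[E]$ put $\|f\|_{FBL[E]}:=\sup\{\sum_{k=1}^n|f(x_k^* )| : n\in\mathbb N,\ x_1^*,\dots,x_n^*\in E^*,\ \sup_{x\in B_E}\sum_{k=1}^n|x_k^*(x)|\le 1\}$. $H_0[E]:=\{f\in H[E]:\|f\|_{FBL[E]}<\infty\}$, a Banach lattice with this norm and pointwise order; $H_0[E]_+$ is its positive cone. *)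

From HB Require Import structures.
From mathcomp Require Import all_boot all_order all_algebra.
From mathcomp Require Import all_classical all_reals all_analysis.
Set Implicit Arguments. Unset Strict Implicit. Unset Printing Implicit Defensive.
Import Order.TTheory GRing.Theory Num.Theory.
Import numFieldNormedType.Exports.
Local Open Scope classical_set_scope.
Local Open Scope ring_scope.

Record dual (R : realType) (E : normedModType R) := Dual {
  dual_fun :> E -> R ;
  dual_linear : forall (a : R) (u v : E), dual_fun (a *: u + v) = a * dual_fun u + dual_fun v ;
  dual_cont : continuous dual_fun }.

Section Defs.
Variables (R : realType) (E : normedModType R).

Definition unit_ballE : set E := [set x | `|x| <= 1].

Definition dual_norm (xs : dual E) : \bar R :=
  ereal_sup [set (`|xs x|)%:E | x in unit_ballE].

Definition dual_comb (a : R) (x y z : dual E) : Prop :=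
  forall e : E, z e = a * x e + y e.

(* Elements of E^{**} restricted to the closed unit ball: linear functionals
   phi on E^* with ||phi|| <= 1, i.e. |phi(x^* )| <= ||x^* || for all x^*. *)
Definition bidual_ball : set {ptws dual E -> R} :=
  [set phi | (forall (a : R) (x y z : dual E), dual_comb a x y z ->
                 phi z = a * phi x + phi y)
           /\ (forall x : dual E, ((`|phi x|)%:E <= dual_norm x)%E)].

Lemma bidual_ball0 : bidual_ball (fun _ => 0).
Proof.
split.
  by move=> a x y z _; rewrite mulr0 addr0.
move=> x; rewrite normr0; apply: ereal_sup_ubound; exists 0; rewrite /unit_ballE /=.
  by rewrite normr0 ler01.
have H := dual_linear x 1 0 0.
rewrite scaler0 addr0 mul1r -{1}[x 0]addr0 in H.
by move/addrI: H => <-; rewrite normr0.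
Qed.

(* (B_{E^{**}}, w^* ) : the unit ball of the bidual, as a subtype carrying the
   initial topology of the inclusion into {ptws E^* -> R}, i.e. the weak^*
   topology sigma(E^{**}, E^* ) restricted to the ball. *)
Definition bidual_ballT := set_type bidual_ball.

HB.instance Definition _ := Topological.on bidual_ballT.
HB.instance Definition _ := isPointed.Build bidual_ballT
  (exist _ (fun _ => 0) (mem_set bidual_ball0)).

Definition bidual_ballM := g_sigma_algebraType (@open bidual_ballT).
HB.instance Definition _ := Measurable.on bidual_ballM.

Definition bb_eval (phi : bidual_ballT) (xs : dual E) : R := (val phi) xs.

Definition f_mu (mu : set bidual_ballM -> \bar R) (xs : dual E) : R :=
  fine (\int[mu]_(phi in setT) (`|bb_eval phi xs|)%:E)%E.

Definition pos_homogeneous (f : dual E -> R) : Prop :=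
  forall (l : R) (x y : dual E), 0 < l -> (forall e : E, y e = l * x e) ->
    f y = l * f x.

Definition fbl_norm (f : dual E -> R) : \bar R :=
  ereal_sup [set r : \bar R | exists (n : nat) (xs : 'I_n -> dual E),
       (forall x : E, unit_ballE x -> \sum_(k < n) `|xs k x| <= 1) /\
       r = (\sum_(k < n) `|f (xs k)|)%:E].

Definition H0 (f : dual E -> R) : Prop :=
  pos_homogeneous f /\ (fbl_norm f < +oo)%E.

Definition H0_pos (f : dual E -> R) : Prop :=
  H0 f /\ forall xs : dual E, 0 <= f xs.

End Defs.

Definition regular_measure (T : ptopologicalType)
    (R : realType) (mu : set (g_sigma_algebraType (@open T)) -> \bar R) : Prop :=
  forall A : set T, <<s @open T >> A ->
    mu A = ereal_sup [set mu K | K in [set K : set T | compact K /\ K `<=` A]] /\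
    mu A = ereal_inf [set mu U | U in [set U : set T | open U /\ A `<=` U]].

From HB Require Import structures.
From mathcomp Require Import all_boot all_order all_algebra.
From mathcomp Require Import all_classical all_reals all_analysis.
From mathcomp Require Import measurable_realfun ring.
Import Order.TTheory GRing.Theory Num.Theory.
Import numFieldNormedType.Exports.
Local Open Scope classical_set_scope.
Local Open Scope ring_scope.

(* Given x^*_1, ..., x^*_n with sup_{B_E} sum_k |x^*_k| <= 1, linearity gives
   sum_k |phi(x^*_k)| = phi(sum_k sgn(phi(x^*_k)) x^*_k) <= ||sum_k sgn(...) x^*_k|| <= 1.
   Integrating this pointwise bound against the probability mu yields
   sum_k f_mu(x^*_k) <= 1. Integrability holds because phi |-> phi(x^* ) is
   w^*-continuous and bounded by the finite norm ||x^* ||, and positive homogeneity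
   of f_mu is inherited from the linearity of each phi. *)

Section DualSpace.
Context {R : realType} {E : normedModType R}.

HB.instance Definition _ (xs : dual E) :=
  GRing.isLinear.Build R E R^o *:%R (dual_fun xs) (dual_linear xs).

Fact dual_zero_linear (a : R) (u v : E) : 0 = a * 0 + 0 :> R.
Proof. by rewrite mulr0 addr0. Qed.

Definition dual_zero : dual E := Dual dual_zero_linear (@cst_continuous E R 0).

Section Combination.
Variables (a : R) (x y : dual E).

Fact dual_combination_linear (b : R) (u v : E) :
  a * x (b *: u + v) + y (b *: u + v) = b * (a * x u + y u) + (a * x v + y v).
Proof. by rewrite !dual_linear; ring. Qed.

Fact dual_combination_continuous : continuous (fun e => a * x e + y e).
Proof.
move=> e.
have a_cont : {for e, continuous (fun=> a)} by exact: cst_continuous.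
have x_cont : {for e, continuous (dual_fun x)} by exact: dual_cont.
have y_cont : {for e, continuous (dual_fun y)} by exact: dual_cont.
exact: continuousD (continuousM a_cont x_cont) y_cont.
Qed.

Definition dual_combination : dual E :=
  Dual dual_combination_linear dual_combination_continuous.

Lemma dual_combinationP : dual_comb a x y dual_combination.
Proof. by []. Qed.

End Combination.

Lemma dual_norm_lty (xs : dual E) : (dual_norm xs < +oo)%E.
Proof.
have xs_cont0 : {for 0, continuous (dual_fun xs)} by exact: dual_cont.
have [r r0 xs_le] := pinfty_ex_gt0
  ((linear_boundedP _).1 (continuous_linear_bounded 0 xs_cont0)).
apply: (@le_lt_trans _ _ r%:E); last exact: ltry.
apply: ge_ereal_sup => _ [x x1 <-]; rewrite lee_fin.
exact: le_trans (xs_le x) (ler_piMr (ltW r0) x1).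
Qed.

End DualSpace.

(* [proj_continuous] needs the index type of the product topology to be an eqType. *)
HB.instance Definition _ (R : realType) (E : normedModType R) :=
  gen_eqMixin (dual E).

Section BidualBall.
Context {R : realType} {E : normedModType R}.
Implicit Types (phi : bidual_ballT E) (x y z : dual E).

Lemma bb_eval_comb phi (a : R) x y z :
  dual_comb a x y z -> bb_eval phi z = a * bb_eval phi x + bb_eval phi y.
Proof. exact: (set_valP phi).1. Qed.

Lemma bb_eval_le_dual_norm phi x : ((`|bb_eval phi x|)%:E <= dual_norm x)%E.
Proof. exact: (set_valP phi).2. Qed.

Lemma bb_evalZ phi (l : R) x y :
  (forall e : E, y e = l * x e) -> bb_eval phi y = l * bb_eval phi x.
Proof.
move=> yE; rewrite (bb_eval_comb phi (l - 1) x x y); first by ring.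
by move=> e; rewrite yE; ring.
Qed.

Lemma bb_eval_sign_combination phi {I : Type} (r : seq I) (F : I -> dual E) :
  exists Z : dual E,
    (forall e, Z e = \sum_(k <- r) Num.sg (bb_eval phi (F k)) * F k e) /\
    bb_eval phi Z = \sum_(k <- r) `|bb_eval phi (F k)|.
Proof.
elim: r => [|k r [Z [ZE phiZ]]].
  exists dual_zero; split=> [e|]; rewrite big_nil //.
  have zero_scaled (e : E) : dual_zero e = 0 * dual_zero e by rewrite mul0r.
  by rewrite (bb_evalZ _ _ _ _ zero_scaled) mul0r.
exists (dual_combination (Num.sg (bb_eval phi (F k))) (F k) Z); split.
  by move=> e; rewrite big_cons /= ZE.
by rewrite (bb_eval_comb _ _ _ _ _ (dual_combinationP _ _ _)) big_cons phiZ -normrEsg.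
Qed.

Lemma sum_abs_bb_eval_le1 phi (n : nat) (xs : 'I_n -> dual E) :
  (forall x : E, unit_ballE x -> \sum_(k < n) `|xs k x| <= 1) ->
  \sum_(k < n) `|bb_eval phi (xs k)| <= 1.
Proof.
move=> xs_le1; have [Z [ZE <-]] := bb_eval_sign_combination phi (index_enum 'I_n) xs.
have Z_le1 : (dual_norm Z <= 1%:E)%E.
  apply: ge_ereal_sup => _ [x x1 <-]; rewrite lee_fin ZE.
  apply: le_trans (ler_norm_sum _ _ _) (le_trans _ (xs_le1 x x1)).
  apply: ler_sum => k _; rewrite normrM ler_piMl // normr_sg.
  by case: (_ != 0).
apply: le_trans (ler_norm _) _; rewrite -lee_fin.
exact: le_trans (bb_eval_le_dual_norm phi Z) Z_le1.
Qed.

Lemma bb_eval_continuous x : continuous (fun phi : bidual_ballT E => bb_eval phi x).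
Proof.
move=> phi.
have val_cont : {for phi, continuous (set_val : bidual_ballT E -> {ptws dual E -> R})}.
  exact: initial_continuous.
have eval_cont : continuous (fun f : {ptws dual E -> R} => f x).
  by move=> f; exact: (@proj_continuous (dual E) (fun=> R) x f).
exact: continuous_comp val_cont (eval_cont _).
Qed.

Lemma measurable_bb_eval x :
  measurable_fun [set: bidual_ballM E] (fun phi => bb_eval phi x).
Proof.
apply: (measurability _ (RGenOpens.measurableE R)) => _ [_ [a [b ->]] <-].
rewrite setTI; apply: sub_sigma_algebra.
by move: (bb_eval_continuous x) => /continuousP; apply; exact: interval_open.
Qed.

Lemma measurable_abs_bb_eval x :
  measurable_fun [set: bidual_ballM E] (fun phi => (`|bb_eval phi x|)%:E).
Proof.
apply/measurable_EFinP.
exact: measurableT_comp (@normr_measurable R setT) (measurable_bb_eval x).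
Qed.

End BidualBall.

Section RepresentingFunction.
Context {R : realType} {E : normedModType R}.
Variable mu : probability (bidual_ballM E) R.

Lemma integrable_abs_bb_eval (x : dual E) :
  mu.-integrable setT (fun phi => (`|bb_eval phi x|)%:E).
Proof.
apply/integrableP; split; first exact: measurable_abs_bb_eval.
have norm_ge0 : (0 <= dual_norm x)%E.
  exact: le_trans (bb_eval_le_dual_norm point x).
apply: le_lt_trans (integral_le_bound _ _ (measurable_abs_bb_eval x) norm_ge0 _) _.
- exact: measurableT.
- by apply: aeW => phi _; rewrite /= normr_id; exact: bb_eval_le_dual_norm.
- by rewrite ltey_eq fin_numM ?fin_num_measure ?ge0_fin_numE ?dual_norm_lty.
Qed.

Lemma f_muE (x : dual E) :
  (f_mu mu x)%:E = (\int[mu]_(phi in setT) (`|bb_eval phi x|)%:E)%E.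
Proof. by rewrite fineK // (integrable_fin_num measurableT (integrable_abs_bb_eval x)). Qed.

Lemma f_mu_ge0 (x : dual E) : 0 <= f_mu mu x.
Proof. by rewrite -lee_fin f_muE; apply: integral_ge0 => phi _; rewrite lee_fin. Qed.

Lemma f_mu_pos_homogeneous : pos_homogeneous (f_mu mu).
Proof.
move=> l x y l_gt0 yE; apply/EFin_inj; rewrite EFinM !f_muE.
rewrite -ge0_integralZl ?lee_fin ?ltW //; last exact: measurable_abs_bb_eval.
apply: eq_integral => phi _.
by rewrite (bb_evalZ phi _ _ _ yE) normrM gtr0_norm // EFinM.
Qed.

Lemma fbl_norm_f_mu_le1 : (fbl_norm (f_mu mu) <= 1)%E.
Proof.
apply: ge_ereal_sup => _ [n [xs [xs_le1 ->]]].
under eq_bigr do rewrite ger0_norm ?f_mu_ge0 //.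
rewrite -sumEFin.
under eq_bigr do rewrite f_muE.
rewrite -ge0_integral_sum //; last by move=> k; exact: measurable_abs_bb_eval.
apply: le_trans (probability_le1 mu measurableT).
rewrite -[X in (_ <= X)%E]mul1e -integral_cst //.
apply: ge0_le_integral => //.
- by move=> phi _; apply: sume_ge0 => k _; rewrite lee_fin.
- by apply: emeasurable_sum => k; exact: measurable_abs_bb_eval.
- by move=> phi _; rewrite sumEFin lee_fin; exact: sum_abs_bb_eval_le1.
Qed.

End RepresentingFunction.

Theorem proposition2p11 (R : realType) (E : completeNormedModType R)
    (mu : probability (bidual_ballM E) R)
    (mu_regular : regular_measure (T := bidual_ballT E) mu) :
  (forall xs : dual E,
     mu.-integrable setT (fun phi => (`|bb_eval phi xs|)%:E)) /\
  H0_pos (f_mu mu) /\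
  (fbl_norm (f_mu mu) <= 1)%E.
Proof.
have fbl_le1 := fbl_norm_f_mu_le1 mu.
split; first exact: integrable_abs_bb_eval.
split=> //; split; last exact: f_mu_ge0.
split; first exact: f_mu_pos_homogeneous.
exact: le_lt_trans fbl_le1 (ltry 1).
Qed.
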